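(* Let $f=g+h$ where $g:\mathbb{R}^n\to\mathbb{R}$ is $C^1$-smooth with $L$-Lipschitz gradient and $h(x)=\lambda\|x\|_1$ for some $\lambda>0$. Let $S=\arg\min f$, let $\bar x\in S$, $I=\{i:\bar x_i=0\}$ and $\mathcal{M}=\{x:x_i=0\ \forall i\in I\}$, and fix $t>0$. If $0\in\operatorname{ri}\partial f(\bar x)$, then the following are equivalent: (i) there exist $\hat\epsilon,\hat\mu>0$ such that $\hat\mu\,\operatorname{dist}(x,S)\le\|x-\operatorname{prox}_{th}(x-t\nabla g(x))\|$ for all $x\in B_{\hat\epsilon}(\bar x)$; (ii) there exist $\epsilon,\mu>0$ such that $\mu\,\operatorname{dist}(x,S\cap\mathcal{M})\le\|\nabla_{\mathcal{M}}f(x)\|$ for all $x\in B_\epsilon(\bar x)\cap\mathcal{M}$.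
   Context: $\partial f(x)=\nabla g(x)+\lambda\partial\|\cdot\|_1(x)$; $\operatorname{ri}$ is the relative interior; $\operatorname{prox}_{th}(z)=\arg\min_y\{h(y)+\frac1{2t}\|y-z\|^2\}$. $\nabla_{\mathcal M}f(x)$ is the Riemannian gradient of the restriction $f|_{\mathcal M}$ (which is smooth near $\bar x$) with respect to the Euclidean metric on the subspace $\mathcal M$, i.e. the orthogonal projection onto $\mathcal M$ of the gradient of any local smooth extension of $f|_{\mathcal M}$. *)

From HB Require Import structures.
From mathcomp Require Import all_boot all_order all_algebra.
From mathcomp Require Import boolp classical_sets reals.
Set Implicit Arguments. Unset Strict Implicit. Unset Printing Implicit Defensive.
Import Order.TTheory GRing.Theory Num.Theory.
Local Open Scope ring_scope.
Local Open Scope classical_set_scope.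

Section Defs.
Variables (R : realType) (n : nat).
Local Notation vec := 'rV[R]_n.

Definition inner (x y : vec) : R := \sum_(i < n) x 0 i * y 0 i.
Definition norm2 (x : vec) : R := Num.sqrt (\sum_(i < n) x 0 i ^+ 2).
Definition norm1 (x : vec) : R := \sum_(i < n) `|x 0 i|.

Definition dist (x : vec) (A : set vec) : R := inf [set norm2 (x - a) | a in A].

Definition is_gradient (g : vec -> R) (dg : vec -> vec) : Prop :=
  forall x eps, 0 < eps -> exists2 delta, 0 < delta &
    forall d, norm2 d < delta ->
      `|g (x + d) - g x - inner (dg x) d| <= eps * norm2 d.

Definition lipschitz_grad (dg : vec -> vec) (L : R) : Prop :=
  forall x y, norm2 (dg x - dg y) <= L * norm2 (x - y).

Definition argmin (f : vec -> R) : set vec := [set x | forall y, f x <= f y].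

(* prox_{t h}(z) = argmin_y { h y + 1/(2t) ||y - z||^2 } (a singleton for the
   functions considered; xget picks its element) *)
Definition prox (t : R) (h : vec -> R) (z : vec) : vec :=
  xget 0 (argmin (fun y => h y + (2 * t)^-1 * norm2 (y - z) ^+ 2)).

Definition subdiff_l1 (x : vec) : set vec :=
  [set v | forall y, norm1 x + inner v (y - x) <= norm1 y].
Definition subdiff_f (dg : vec -> vec) (lam : R) (x : vec) : set vec :=
  [set dg x + lam *: v | v in subdiff_l1 x].

Definition aff_hull (C : set vec) : set vec :=
  [set y | exists k (p : 'I_k -> vec) (w : 'I_k -> R),
     [/\ forall j, C (p j), \sum_(j < k) w j = 1 & y = \sum_(j < k) w j *: p j]].
Definition ri (C : set vec) : set vec :=
  [set x | C x /\ exists2 e, 0 < e &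
     forall y, aff_hull C y -> norm2 (y - x) < e -> C y].

Definition manifoldM (xbar : vec) : set vec :=
  [set x | forall i, xbar 0 i = 0 -> x 0 i = 0].

(* v is the Riemannian gradient at x of the restriction of f to the
   linear subspace M (Euclidean metric): v in M and
   f(x + d) = f x + <v, d> + o(||d||) for d in M *)
Definition is_riem_grad (M : set vec) (f : vec -> R) (x v : vec) : Prop :=
  M v /\ forall eps, 0 < eps -> exists2 delta, 0 < delta &
    forall d, M d -> norm2 d < delta ->
      `|f (x + d) - f x - inner v d| <= eps * norm2 d.
Definition riem_grad (M : set vec) (f : vec -> R) (x : vec) : vec :=
  xget 0 [set v | is_riem_grad M f x v].
End Defs.

(* Since 0 is in the relative interior of the subdifferential of f at xbar,
   strict complementarity holds: dg xbar = - lam sign(xbar) on the support of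
   xbar, and |dg xbar| < lam on I.  In a small ball around xbar the
   prox-gradient step therefore zeroes the coordinates in I and keeps the signs
   of xbar elsewhere, so the prox-gradient residual splits into two pieces on
   complementary coordinates: x_I, and t times the Riemannian gradient of f on
   M, which is dg x + lam sign(xbar) off I.  By the same margin, minimizers near
   xbar lie in M.  On M the residual is just t times the Riemannian gradient;
   off M, projecting x onto M costs at most ||x_I|| in distance and L ||x_I||
   in gradient, and ||x_I|| is itself bounded by the residual. *)

From HB Require Import structures.
From mathcomp Require Import all_boot all_order all_algebra.
From mathcomp Require Import boolp classical_sets reals.
From mathcomp Require Import ring lra.
Import Order.TTheory GRing.Theory Num.Theory.
Local Open Scope ring_scope.
Local Open Scope classical_set_scope.
Set Implicit Arguments. Unset Strict Implicit. Unset Printing Implicit Defensive.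

Lemma mul_normr_le1 (R : realDomainType) (s a : R) :
  `|s| <= 1 -> - `|a| <= s * a <= `|a|.
Proof. by move=> s1; rewrite -ler_norml normrM ler_piMl. Qed.

Lemma normr_sgM (R : realDomainType) (a b : R) :
  b != 0 -> 0 <= Num.sg b * a -> `|a| = Num.sg b * a.
Proof. by move=> b0 ab; rewrite -(ger0_norm ab) normrM normr_sg b0 mul1r. Qed.

Lemma pos_lower_bound (R : realFieldType) (n : nat) (q : 'I_n -> R) :
  (forall k, 0 < q k) -> exists2 c, 0 < c & forall k, c <= q k.
Proof.
move=> qp; have qV_ge0 k : 0 <= (q k)^-1 by rewrite invr_ge0 ltW.
have S0 : 0 <= \sum_(k < n) (q k)^-1 by apply: sumr_ge0.
exists (1 + \sum_(k < n) (q k)^-1)^-1; first by rewrite invr_gt0 ltr_pwDl.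
move=> k; rewrite -lef_pV2 ?posrE ?invr_gt0 ?ltr_pwDl // invrK (bigD1 k) //=.
have : 0 <= \sum_(i < n | i != k) (q i)^-1 by apply: sumr_ge0.
lra.
Qed.

Section Euclidean.
Variables (R : realType) (n : nat).
Local Notation vec := 'rV[R]_n.
Implicit Types (x y z a b u v w : vec).

Let sumsq_ge0 x : 0 <= \sum_(i < n) x 0 i ^+ 2.
Proof. by apply: sumr_ge0 => i _; rewrite sqr_ge0. Qed.

Lemma norm2_ge0 x : 0 <= norm2 x.
Proof. exact: sqrtr_ge0. Qed.

Lemma norm2_sqr x : norm2 x ^+ 2 = \sum_(i < n) x 0 i ^+ 2.
Proof. by rewrite sqr_sqrtr. Qed.

Lemma norm2_eq0 x : norm2 x = 0 -> x = 0.
Proof.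
move=> x0; have /eqP : \sum_(i < n) x 0 i ^+ 2 = 0 by rewrite -norm2_sqr x0 expr0n.
rewrite psumr_eq0 => [/allP xi0|i _]; last by rewrite sqr_ge0.
apply/rowP => k; rewrite mxE.
by have /implyP/(_ isT) := xi0 k (mem_index_enum k); rewrite sqrf_eq0 => /eqP.
Qed.

Lemma norm2_le_coord a b : (forall k, `|a 0 k| <= `|b 0 k|) -> norm2 a <= norm2 b.
Proof.
move=> ab; rewrite ler_sqrt //; apply: ler_sum => k _.
by rewrite -(real_normK (num_real (a 0 k))) -(real_normK (num_real (b 0 k))) lerXn2r ?nnegrE.
Qed.

Lemma coord_le_norm2 x k : `|x 0 k| <= norm2 x.
Proof.
rewrite -sqrtr_sqr ler_sqrt // (bigD1 k) //= lerDl.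
by apply: sumr_ge0 => i _; rewrite sqr_ge0.
Qed.

Lemma norm2Z s x : norm2 (s *: x) = `|s| * norm2 x.
Proof.
rewrite /norm2 -sqrtr_sqr -sqrtrM ?sqr_ge0 // mulr_sumr; congr Num.sqrt.
by apply: eq_bigr => i _; rewrite mxE exprMn.
Qed.

Lemma norm2N x : norm2 (- x) = norm2 x.
Proof. by rewrite -scaleN1r norm2Z normrN1 mul1r. Qed.

Lemma norm2_distC x y : norm2 (x - y) = norm2 (y - x).
Proof. by rewrite -norm2N opprB. Qed.

Lemma innerZr s v w : inner v (s *: w) = s * inner v w.
Proof. by rewrite /inner mulr_sumr; apply: eq_bigr => i _; rewrite mxE mulrCA. Qed.

Lemma innerBl u v w : inner (u - v) w = inner u w - inner v w.
Proof. by rewrite /inner -sumrB; apply: eq_bigr => i _; rewrite !mxE mulrBl. Qed.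

Lemma inner_self v : inner v v = norm2 v ^+ 2.
Proof. by rewrite norm2_sqr; apply: eq_bigr => i _; rewrite expr2. Qed.

Lemma cauchy_schwarz a b : inner a b <= norm2 a * norm2 b.
Proof.
set A := norm2 a; set B := norm2 b.
have [A0 B0] : 0 <= A /\ 0 <= B by split; apply: norm2_ge0.
have [/eqP|ABp] := eqVneq (A * B) 0.
  rewrite mulf_eq0 => /orP[] /eqP/norm2_eq0 ->;
  by rewrite /inner big1 ?mulr_ge0 // => i _; rewrite mxE ?mul0r ?mulr0.
(* expand 0 <= ||B a - A b||^2, where A = ||a|| and B = ||b|| *)
have : 0 <= \sum_(i < n) (B * a 0 i - A * b 0 i) ^+ 2.
  by apply: sumr_ge0 => i _; rewrite sqr_ge0.
have -> : \sum_(i < n) (B * a 0 i - A * b 0 i) ^+ 2 =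
    B ^+ 2 * \sum_(i < n) a 0 i ^+ 2 - 2 * A * B * inner a b
    + A ^+ 2 * \sum_(i < n) b 0 i ^+ 2.
  rewrite /inner !mulr_sumr -sumrB -big_split /=.
  by apply: eq_bigr => i _; ring.
rewrite -!norm2_sqr -/A -/B => H.
have ABpos : 0 < A * B by rewrite lt_def ABp mulr_ge0.
have : 2 * (A * B) * inner a b <= 2 * (A * B) * (A * B) by nra.
by rewrite ler_pM2l // mulr_gt0.
Qed.

Lemma norm2D a b : norm2 (a + b) <= norm2 a + norm2 b.
Proof.
rewrite -(ler_pXn2r (n := 2)) ?nnegrE ?addr_ge0 ?norm2_ge0 //.
have -> : norm2 (a + b) ^+ 2 = norm2 a ^+ 2 + 2 * inner a b + norm2 b ^+ 2.
  rewrite !norm2_sqr /inner mulr_sumr -!big_split /=.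
  by apply: eq_bigr => i _; rewrite mxE; ring.
have := cauchy_schwarz a b; nra.
Qed.

Lemma norm2_triangle x y z : norm2 (x - z) <= norm2 (x - y) + norm2 (y - z).
Proof. by have := norm2D (x - y) (y - z); rewrite addrA subrK. Qed.

Lemma inner_delta v k : inner v (delta_mx 0 k) = v 0 k.
Proof.
rewrite /inner (bigD1 k) //= mxE !eqxx mulr1 big1 ?addr0 // => j jk.
by rewrite mxE (negbTE jk) andbF mulr0.
Qed.

Lemma norm2_delta k : norm2 (delta_mx 0 k : vec) = 1.
Proof.
rewrite /norm2 (bigD1 k) //= mxE !eqxx big1 ?addr0 ?expr1n ?sqrtr1 // => j jk.
by rewrite mxE (negbTE jk) andbF expr0n.
Qed.

Lemma norm1_addZ_delta x k s :
  norm1 (x + s *: delta_mx 0 k) = norm1 x - `|x 0 k| + `|x 0 k + s|.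
Proof.
rewrite /norm1 (bigD1 k) //= [in RHS](bigD1 k) //= !mxE !eqxx mulr1.
rewrite (addrC `|x 0 k|) addrK [RHS]addrC; congr (_ + _).
by apply: eq_bigr => j jk; rewrite !mxE (negbTE jk) andbF mulr0 addr0.
Qed.

Lemma dist_le x (A : set vec) a : A a -> dist x A <= norm2 (x - a).
Proof.
move=> Aa; have : has_lbound [set norm2 (x - a) | a in A].
  by exists 0 => _ [b _ <-]; apply: norm2_ge0.
by move/ge_inf; apply; exists a.
Qed.

Lemma dist_ge x (A : set vec) a0 c : A a0 ->
  (forall a, A a -> c <= norm2 (x - a)) -> c <= dist x A.
Proof.
move=> Aa0 cA; apply: lb_le_inf; first by exists (norm2 (x - a0)), a0.
by move=> _ [b Ab <-]; apply: cA.
Qed.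

Lemma dist_subset x (A B : set vec) b0 : B b0 -> B `<=` A -> dist x A <= dist x B.
Proof. by move=> Bb0 BA; apply: dist_ge Bb0 _ => b /BA; apply: dist_le. Qed.

Lemma dist_triangle x y (A : set vec) a0 : A a0 ->
  dist x A <= norm2 (x - y) + dist y A.
Proof.
move=> Aa0; rewrite -lerBlDl; apply: dist_ge Aa0 _ => a Aa.
by rewrite lerBlDl; apply: le_trans (dist_le x Aa) (norm2_triangle x y a).
Qed.

End Euclidean.

Section L1.
Variables (R : realType) (n : nat).
Local Notation vec := 'rV[R]_n.

Lemma subdiff_l1P (x v : vec) : subdiff_l1 x v <->
  (forall k, `|v 0 k| <= 1 /\ v 0 k * x 0 k = `|x 0 k|).
Proof.
split=> [vx k|vx y]; last first.
  rewrite /norm1 /inner -big_split /=; apply: ler_sum => k _; rewrite !mxE.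
  have [v1 vxk] := vx k; have /andP[_ vy] := mul_normr_le1 (y 0 k) v1.
  by rewrite mulrBr vxk; lra.
have step s : `|x 0 k| + s * v 0 k <= `|x 0 k + s|.
  have := vx (x + s *: delta_mx 0 k).
  by rewrite addrAC subrr add0r innerZr inner_delta norm1_addZ_delta; lra.
have := step 1; have := step (-1); have := step (- x 0 k).
have := ler_normD (x 0 k) 1; have := ler_normD (x 0 k) (-1).
rewrite normrN normr1 subrr normr0 => N1 N2 T3 T2 T1.
have v1 : `|v 0 k| <= 1 by rewrite ler_norml; apply/andP; split; lra.
split=> //; apply/eqP; rewrite eq_le; apply/andP; split; last by lra.
by have /andP[_] := mul_normr_le1 (x 0 k) v1.
Qed.

Lemma subdiff_l1_flip (x v : vec) k : x 0 k = 0 -> subdiff_l1 x v ->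
  subdiff_l1 x (v - (2 * v 0 k) *: delta_mx 0 k).
Proof.
move=> xk /subdiff_l1P v_sub; apply/subdiff_l1P => j; rewrite !mxE.
have [<-|jk] := eqVneq k j; last by rewrite andbF mulr0 subr0; exact: v_sub.
rewrite !eqxx mulr1 xk mulr0 normr0 (_ : _ - _ = - v 0 k); last by ring.
by rewrite normrN; have [] := v_sub k.
Qed.

Lemma soft_threshold_le (t lam s p z y : R) :
  0 < t -> 0 <= lam -> `|s| <= 1 -> s * p = `|p| -> z - p = t * lam * s ->
  lam * `|p| + (2 * t)^-1 * (p - z) ^+ 2 + (2 * t)^-1 * (y - p) ^+ 2
    <= lam * `|y| + (2 * t)^-1 * (y - z) ^+ 2.
Proof.
move=> t0 l0 s1 sp zp; have /andP[_ sy] := mul_normr_le1 y s1.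
have -> : z = p + t * lam * s by rewrite -zp; ring.
rewrite -subr_ge0 (_ : _ - _ = lam * (`|y| - s * y)).
  by rewrite mulr_ge0 ?subr_ge0.
by rewrite -sp; field; rewrite gt_eqF.
Qed.

Lemma prox_l1_eq (t lam : R) (z p : vec) : 0 < t -> 0 < lam ->
  (forall k, exists s,
     [/\ `|s| <= 1, s * p 0 k = `|p 0 k| & z 0 k - p 0 k = t * lam * s]) ->
  prox t (fun x => lam * norm1 x) z = p.
Proof.
move=> t0 l0 p_opt.
pose phi y := lam * norm1 y + (2 * t)^-1 * norm2 (y - z) ^+ 2.
have c0 : 0 < (2 * t)^-1 by rewrite invr_gt0 mulr_gt0.
have phi_ge y : phi p + (2 * t)^-1 * norm2 (y - p) ^+ 2 <= phi y.
  rewrite /phi /norm1 !norm2_sqr !mulr_sumr -!big_split /=.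
  apply: ler_sum => k _; rewrite !mxE.
  have [s [s1 sp zp]] := p_opt k.
  exact: soft_threshold_le (ltW l0) s1 sp zp.
apply: xget_unique => [y|y ymin].
  by apply: le_trans (phi_ge y); rewrite lerDl mulr_ge0 ?exprn_ge0 ?norm2_ge0 ?ltW.
have := ymin p; have := phi_ge y; rewrite -/(phi y) -/(phi p) => ge le.
have : (2 * t)^-1 * norm2 (y - p) ^+ 2 <= 0 by lra.
rewrite pmulr_rle0 // => yp; apply/eqP; rewrite -subr_eq0; apply/eqP/norm2_eq0.
by apply/eqP; rewrite -sqrf_eq0 eq_le yp exprn_ge0 ?norm2_ge0.
Qed.

End L1.

Lemma aff_hull_line (R : realType) (n : nat) (C : set 'rV[R]_n) a b r :
  C a -> C b -> aff_hull C ((1 - r) *: a + r *: b).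
Proof.
move=> Ca Cb; exists 2%N, (fun j : 'I_2 => if val j == 0%N then a else b),
  (fun j : 'I_2 => if val j == 0%N then 1 - r else r).
split; first by move=> j; case: ifP.
- by rewrite !big_ord_recl big_ord0 /= addr0 subrK.
- by rewrite !big_ord_recl big_ord0 /= addr0.
Qed.

Section StrictComplementarity.
Variables (R : realType) (n : nat).
Local Notation vec := 'rV[R]_n.
Variables (dg : vec -> vec) (lam : R) (xbar : vec).
Hypothesis l0 : 0 < lam.

Lemma optimality_support k : subdiff_f dg lam xbar 0 -> xbar 0 k != 0 ->
  dg xbar 0 k = - lam * Num.sg (xbar 0 k).
Proof.
move=> [v /subdiff_l1P v_sub v_opt] xk; have [_ vx] := v_sub k.
have /eqP : (v 0 k - Num.sg (xbar 0 k)) * xbar 0 k = 0.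
  by rewrite mulrBl vx -normrEsg subrr.
rewrite mulf_eq0 (negbTE xk) orbF subr_eq0 => /eqP <-.
by have := congr1 (fun u : vec => u 0 k) v_opt; rewrite !mxE; lra.
Qed.

Lemma ri_optimality_inactive k : ri (subdiff_f dg lam xbar) 0 -> xbar 0 k = 0 ->
  `|dg xbar 0 k| < lam.
Proof.
move=> [[v0 v0_sub v0_opt] [e e0 e_ball]] xk.
have /subdiff_l1P v0_bnd := v0_sub.
have dgk : dg xbar 0 k = - lam * v0 0 k.
  by have := congr1 (fun u : vec => u 0 k) v0_opt; rewrite !mxE; lra.
have [v0k_le1 _] := v0_bnd k.
rewrite dgk normrM normrN (gtr0_norm l0) gtr_pMr // lt_def v0k_le1 andbT.
apply/negP => /eqP v0k1.
(* if |v0_k| = 1, extrapolating beyond 0 along the line through the subgradients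
   given by v0 and by its flip at k stays in the affine hull but leaves the set *)
pose v1 := v0 - (2 * v0 0 k) *: delta_mx 0 k.
have v1_sub : subdiff_l1 xbar v1 by apply: subdiff_l1_flip.
pose s := e / (2 * lam).
have s0 : 0 < s by rewrite divr_gt0 // mulr_gt0.
pose y : vec := (lam * s * v0 0 k) *: delta_mx 0 k.
have y_aff : aff_hull (subdiff_f dg lam xbar) y.
  suff -> : y = (1 - (- s / 2)) *: (dg xbar + lam *: v0)
                + (- s / 2) *: (dg xbar + lam *: v1).
    by apply: aff_hull_line; [exists v0 | exists v1].
  rewrite /v1 scalerBr addrA v0_opt scaler0 !add0r scalerA scalerN scalerA.
  by rewrite /y -scaleNr; congr (_ *: _); field.
have y_small : norm2 (y - 0) < e.
  rewrite subr0 norm2Z norm2_delta mulr1 !normrM -v0k1 mulr1.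
  rewrite normfV (gtr0_norm l0) (gtr0_norm e0) gtr0_norm ?mulr_gt0 //.
  by rewrite (_ : lam * _ = e / 2); [lra | field; rewrite gt_eqF].
have [w /subdiff_l1P w_bnd w_opt] := e_ball y y_aff y_small.
have := congr1 (fun u : vec => u 0 k) w_opt; rewrite !mxE !eqxx mulr1 dgk => wk.
have [+ _] := w_bnd k.
have -> : w 0 k = (1 + s) * v0 0 k.
  by apply: (mulfI (lt0r_neq0 l0)); lra.
by rewrite normrM -v0k1 mulr1 gtr0_norm; lra.
Qed.

Definition margin (k : 'I_n) : R :=
  if xbar 0 k == 0 then lam - `|dg xbar 0 k| else `|xbar 0 k|.

Lemma margin_gt0 k : ri (subdiff_f dg lam xbar) 0 -> 0 < margin k.
Proof.
rewrite /margin => x_ri; case: eqP => [xk|/eqP xk]; last by rewrite normr_gt0.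
by rewrite subr_gt0; exact: ri_optimality_inactive.
Qed.

End StrictComplementarity.

Section Minimizers.
Variables (R : realType) (n : nat).
Local Notation vec := 'rV[R]_n.
Variables (g : vec -> R) (dg : vec -> vec) (lam : R).
Hypothesis Hg : is_gradient g dg.

Lemma argmin_coord_eq0 y i : argmin (fun x => g x + lam * norm1 x) y ->
  `|dg y 0 i| < lam -> y 0 i = 0.
Proof.
move=> ymin dgi; apply/eqP/negPn/negP => yi.
set s := Num.sg (y 0 i); set beta := lam - `|dg y 0 i|.
have s1 : `|s| <= 1 by rewrite normr_sg yi.
have beta0 : 0 < beta by rewrite subr_gt0.
have [d0 d0_gt0 g_lin] := Hg y (divr_gt0 beta0 (ltr0Sn _ 1)).
(* moving y_i towards 0 by m lowers the l1 term by lam m but raises g by at most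
   (|dg y_i| + beta / 2) m *)
set m := Num.min (d0 / 2) `|y 0 i|.
have m0 : 0 < m by rewrite lt_min divr_gt0 // normr_gt0 yi.
have m_d0 : m <= d0 / 2 by rewrite ge_min lexx.
have m_yi : m <= `|y 0 i| by rewrite ge_min lexx orbT.
pose d : vec := (- (s * m)) *: delta_mx 0 i.
have nd : norm2 d = m.
  by rewrite norm2Z norm2_delta mulr1 normrN normrM normr_sg yi mul1r gtr0_norm.
have := g_lin d; rewrite nd innerZr inner_delta => /(_ ltac:(lra)) gd.
have := ler_norm (g (y + d) - g y - - (s * m) * dg y 0 i) => gd'.
have := ymin (y + d); rewrite /= norm1_addZ_delta.
have -> : `|y 0 i + - (s * m)| = `|y 0 i| - m.
  rewrite {1}(numEsg (y 0 i)) -/s -mulrN -mulrDr.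
  by rewrite normrM normr_sg yi mul1r ger0_norm // subr_ge0.
have /andP[sdg _] := mul_normr_le1 (dg y 0 i) s1.
have : m * (- `|dg y 0 i|) <= m * (s * dg y 0 i) by rewrite ler_pM2l.
have : 0 < beta * m by rewrite mulr_gt0.
rewrite /beta in gd *; lra.
Qed.

End Minimizers.

Lemma is_riem_grad_unique (R : realType) (n : nat) (xbar : 'rV[R]_n)
    (F : 'rV[R]_n -> R) x v w :
  is_riem_grad (manifoldM xbar) F x v -> is_riem_grad (manifoldM xbar) F x w ->
  v = w.
Proof.
move=> [Mv v_exp] [Mw w_exp]; apply/eqP; rewrite -subr_eq0; apply/negP => /negP uz.
set u := v - w.
have nu : 0 < norm2 u.
  by rewrite lt_def norm2_ge0 andbT; apply: contra uz => /eqP/norm2_eq0/eqP.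
have e4 : 0 < norm2 u / 4 by rewrite divr_gt0.
have [d1 d1_gt0 v_lin] := v_exp _ e4.
have [d2 d2_gt0 w_lin] := w_exp _ e4.
(* along tau u the two expansions differ by tau ||u||^2, more than their errors allow *)
have d12 : 0 < Num.min d1 d2 by rewrite lt_min d1_gt0.
set tau := Num.min d1 d2 / (2 * norm2 u).
have tau0 : 0 < tau by rewrite divr_gt0 ?mulr_gt0.
have Md : manifoldM xbar (tau *: u).
  by move=> i xi; rewrite !mxE (Mv i xi) (Mw i xi) subrr mulr0.
have nd : norm2 (tau *: u) = tau * norm2 u by rewrite norm2Z gtr0_norm.
have nd_lt : tau * norm2 u < Num.min d1 d2.
  by rewrite /tau (_ : _ * _ = Num.min d1 d2 / 2); [lra | field; rewrite gt_eqF].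
move: nd_lt; rewrite lt_min => /andP[nd1 nd2].
have := v_lin _ Md; rewrite nd => /(_ nd1) /ler_normlP[+ _].
have := w_lin _ Md; rewrite nd => /(_ nd2) /ler_normlP[_].
have : inner v (tau *: u) - inner w (tau *: u) = tau * norm2 u ^+ 2.
  by rewrite -innerBl innerZr inner_self.
have : 0 < tau * norm2 u ^+ 2 by rewrite mulr_gt0 // exprn_gt0.
nra.
Qed.

Section NearMinimizer.
Variables (R : realType) (n : nat).
Local Notation vec := 'rV[R]_n.
Variables (g : vec -> R) (dg : vec -> vec) (L lam t : R) (xbar : vec).
Hypotheses (Hg : is_gradient g dg) (L0 : 0 < L) (HL : lipschitz_grad dg L)
  (l0 : 0 < lam) (t0 : 0 < t) (xbar_opt : subdiff_f dg lam xbar 0).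
Variable c : R.
Hypotheses (c0 : 0 < c) (c_margin : forall k, c <= margin dg lam xbar k).
(* lra and nra ignore section hypotheses: the positivity facts they need are
   pushed on the goal first *)

Local Notation h := (fun x => lam * norm1 x).
Local Notation f := (fun x => g x + lam * norm1 x).
Local Notation S := (argmin f).
Local Notation M := (manifoldM xbar).

(* rho (1 + t L) < min c (t c): on the ball of radius rho around xbar the
   prox-gradient step keeps the sign pattern of xbar *)
Definition rho := t * c / ((1 + t) * (1 + t * L)).

Lemma rho_gt0 : 0 < rho.
Proof. by rewrite divr_gt0 ?mulr_gt0 // addr_gt0 // mulr_gt0. Qed.

Let rho_mul : rho * (1 + t * L) = t * c / (1 + t).
Proof. by rewrite /rho; field; rewrite !gt_eqF ?addr_gt0 ?mulr_gt0. Qed.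

Lemma rho_mul_lt_c : rho * (1 + t * L) < c.
Proof. by rewrite rho_mul ltr_pdivrMr; have := c0; have := t0; nra. Qed.

Lemma rho_mul_lt_tc : rho * (1 + t * L) < t * c.
Proof. by rewrite rho_mul ltr_pdivrMr; have := mulr_gt0 t0 c0; have := t0; nra. Qed.

Lemma rho_lt_c : rho < c.
Proof.
have := rho_mul_lt_c; have := mulr_gt0 rho_gt0 (mulr_gt0 t0 L0); lra.
Qed.

Lemma L_rho_lt_c : L * rho < c.
Proof. by have := rho_mul_lt_tc; have := rho_gt0; have := t0; nra. Qed.

Lemma coord_near x k : norm2 (x - xbar) < rho -> `|x 0 k - xbar 0 k| < rho.
Proof. by apply: le_lt_trans; have := coord_le_norm2 (x - xbar) k; rewrite !mxE. Qed.

Lemma grad_coord_near x k : norm2 (x - xbar) < rho ->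
  `|dg x 0 k - dg xbar 0 k| <= L * rho.
Proof.
move=> near; have := coord_le_norm2 (dg x - dg xbar) k; rewrite !mxE => dk.
by apply: le_trans dk (le_trans (HL x xbar) _); rewrite ler_pM2l // ltW.
Qed.

Definition gradM (x : vec) : vec :=
  \row_k (if xbar 0 k == 0 then 0 else dg x 0 k + lam * Num.sg (xbar 0 k)).

Definition projI (x : vec) : vec := \row_k (if xbar 0 k == 0 then x 0 k else 0).

Lemma inactive_step_le x k : norm2 (x - xbar) < rho -> xbar 0 k = 0 ->
  `|x 0 k - t * dg x 0 k| <= t * lam.
Proof.
move=> near xk.
have := coord_near k near; rewrite xk subr0 => xk_small.
have dgk : `|dg x 0 k| <= lam - c + L * rho.
  have := c_margin k; rewrite /margin xk eqxx.
  have := lerB_dist (dg x 0 k) (dg xbar 0 k); have := grad_coord_near k near.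
  lra.
have := ler_normB (x 0 k) (t * dg x 0 k); rewrite normrM (gtr0_norm t0).
have : t * `|dg x 0 k| <= t * (lam - c + L * rho) by rewrite ler_pM2l.
have := rho_mul_lt_tc; have := t0; lra.
Qed.

Lemma active_step_sign x k : norm2 (x - xbar) < rho -> xbar 0 k != 0 ->
  0 <= Num.sg (xbar 0 k) * (x 0 k - t * (dg x 0 k + lam * Num.sg (xbar 0 k))).
Proof.
move=> near xk; set s := Num.sg (xbar 0 k).
have s1 : `|s| <= 1 by rewrite normr_sg xk.
have ss : s * s = 1 by rewrite -expr2 sqr_sg xk.
have sdg : s * dg xbar 0 k = - lam.
  by rewrite (optimality_support xbar_opt xk) mulrCA ss mulr1.
have sx : c <= s * xbar 0 k.
  by have := c_margin k; rewrite /margin (negbTE xk) -normrEsg.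
have /andP[dx _] := mul_normr_le1 (x 0 k - xbar 0 k) s1.
have /andP[_ ddg] := mul_normr_le1 (dg x 0 k - dg xbar 0 k) s1.
have := coord_near k near; have := grad_coord_near k near => dg_near x_near.
have : t * (s * (dg x 0 k - dg xbar 0 k)) <= t * (L * rho).
  by rewrite ler_pM2l //; apply: le_trans ddg dg_near.
have : t * lam * (s * s) = t * lam by rewrite ss mulr1.
have : t * (s * dg xbar 0 k) = - (t * lam) by rewrite sdg mulrN.
have := rho_mul_lt_c; lra.
Qed.

Lemma prox_grad_residual x : norm2 (x - xbar) < rho ->
  x - prox t h (x - t *: dg x) = projI x + t *: gradM x.
Proof.
move=> near; rewrite (@prox_l1_eq _ _ _ _ _ (x - (projI x + t *: gradM x))) ?subKr //.
move=> k; rewrite !mxE; case: eqP => [xk|/eqP xk].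
  exists ((x 0 k - t * dg x 0 k) / (t * lam)); split.
  + rewrite normrM normfV (gtr0_norm (mulr_gt0 t0 l0)) ler_pdivrMr ?mulr_gt0 //.
    by rewrite mul1r inactive_step_le.
  + by rewrite mulr0 addr0 subrr mulr0 normr0.
  + by rewrite mulr0 addr0 subrr subr0; field; rewrite !gt_eqF.
exists (Num.sg (xbar 0 k)); split.
- by rewrite normr_sg xk.
- by rewrite add0r (normr_sgM xk (active_step_sign near xk)).
- by rewrite add0r; ring.
Qed.

Lemma norm2_projI_le x : norm2 (projI x) <= norm2 (projI x + t *: gradM x).
Proof. by apply: norm2_le_coord => k; rewrite !mxE; case: ifP; rewrite ?mulr0 ?addr0 ?normr0 ?normr_ge0. Qed.

Lemma norm2_gradM_le x : t * norm2 (gradM x) <= norm2 (projI x + t *: gradM x).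
Proof.
rewrite -[t in t * _](gtr0_norm t0) -norm2Z; apply: norm2_le_coord => k.
by rewrite !mxE; case: ifP; rewrite ?mulr0 ?normr0 ?normr_ge0 // add0r.
Qed.

Lemma projI_M x : M x -> projI x = 0.
Proof. by move=> Mx; apply/rowP => k; rewrite !mxE; case: ifP => // /eqP /Mx. Qed.

Lemma M_subr_projI x : M (x - projI x).
Proof. by move=> i xi; rewrite !mxE xi eqxx subrr. Qed.

Lemma norm2_subr_projI_le x : norm2 (x - projI x - xbar) <= norm2 (x - xbar).
Proof.
apply: norm2_le_coord => k; rewrite !mxE.
by case: eqP => [->|_]; rewrite ?subrr ?normr0 ?normr_ge0 // subr0.
Qed.

Lemma gradM_lipschitz x y : norm2 (gradM x - gradM y) <= L * norm2 (x - y).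
Proof.
apply: le_trans (HL x y); apply: norm2_le_coord => k; rewrite !mxE.
by case: ifP; rewrite ?subrr ?normr0 ?normr_ge0 // opprD addrACA subrr addr0.
Qed.

Lemma norm1_local_linear x d : M x -> M d -> norm2 (x - xbar) < rho ->
  norm2 d < c - rho ->
  lam * norm1 (x + d) - lam * norm1 x = inner (gradM x) d - inner (dg x) d.
Proof.
move=> Mx Md near d_small; rewrite /norm1 /inner !mulr_sumr -!sumrB.
apply: eq_bigr => k _; rewrite !mxE; case: eqP => [xk|/eqP xk].
  by rewrite (Mx k xk) (Md k xk) addr0 normr0 !mulr0 subrr.
set s := Num.sg (xbar 0 k).
have s1 : `|s| <= 1 by rewrite normr_sg xk.
have sx : c <= s * xbar 0 k.
  by have := c_margin k; rewrite /margin (negbTE xk) -normrEsg.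
have /andP[dx _] := mul_normr_le1 (x 0 k - xbar 0 k) s1.
have /andP[dd _] := mul_normr_le1 (d 0 k) s1.
have := coord_near k near; have := coord_le_norm2 d k; have := rho_lt_c.
move=> rho_c dk xk_near.
have sx_ge0 : 0 <= s * x 0 k by lra.
have sxd_ge0 : 0 <= s * (x 0 k + d 0 k) by lra.
by rewrite (normr_sgM xk sx_ge0) (normr_sgM xk sxd_ge0) /s; ring.
Qed.

Lemma is_riem_grad_gradM x : M x -> norm2 (x - xbar) < rho ->
  is_riem_grad M f x (gradM x).
Proof.
move=> Mx near; split=> [i xi|eps eps0]; first by rewrite !mxE xi eqxx.
have [d0 d0_gt0 g_lin] := Hg x eps0.
exists (Num.min d0 (c - rho)); first by rewrite lt_min d0_gt0 subr_gt0 rho_lt_c.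
move=> d Md; rewrite lt_min => /andP[d_d0 d_c].
have -> : g (x + d) + lam * norm1 (x + d) - (g x + lam * norm1 x) - inner (gradM x) d
    = g (x + d) - g x - inner (dg x) d.
  by have := norm1_local_linear Mx Md near d_c; lra.
exact: g_lin.
Qed.

Lemma riem_grad_near x : M x -> norm2 (x - xbar) < rho -> riem_grad M f x = gradM x.
Proof.
move=> Mx near; apply: xget_unique; first exact: is_riem_grad_gradM.
by move=> w /is_riem_grad_unique; apply; apply: is_riem_grad_gradM.
Qed.

Lemma argmin_near_M y : S y -> norm2 (y - xbar) < rho -> M y.
Proof.
move=> Sy near i xi; apply: (argmin_coord_eq0 Hg Sy).
have := c_margin i; rewrite /margin xi eqxx.
have := lerB_dist (dg y 0 i) (dg xbar 0 i); have := grad_coord_near i near.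
have := L_rho_lt_c; lra.
Qed.

Lemma dist_argmin_M x : S xbar -> norm2 (x - xbar) < rho / 2 ->
  dist x (S `&` M) <= dist x S.
Proof.
move=> Sxbar near.
have SM_xbar : (S `&` M) xbar by split; [exact: Sxbar | move=> i].
apply: dist_ge Sxbar _ => a Sa.
have [ax|xa] := ltP (norm2 (x - a)) (norm2 (x - xbar)).
  apply: dist_le; split=> //; apply: argmin_near_M => //.
  by have := norm2_triangle a x xbar; rewrite (norm2_distC a x); lra.
by apply: le_trans (dist_le x SM_xbar) xa.
Qed.

Definition residual_bound eps mu := forall x, norm2 (x - xbar) < eps ->
  mu * dist x S <= norm2 (x - prox t h (x - t *: dg x)).

Definition riem_bound eps mu := forall x, M x -> norm2 (x - xbar) < eps ->
  mu * dist x (S `&` M) <= norm2 (riem_grad M f x).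

Lemma riem_bound_of_residual_bound eps mu : 0 <= mu -> S xbar ->
  residual_bound eps mu -> riem_bound (Num.min eps (rho / 2)) (mu / t).
Proof.
move=> mu0 Sxbar res_bound x Mx; rewrite lt_min => /andP[x_eps x_rho].
have near : norm2 (x - xbar) < rho by have := rho_gt0; lra.
have := res_bound x x_eps.
rewrite prox_grad_residual // projI_M // add0r norm2Z gtr0_norm //.
rewrite riem_grad_near // mulrAC ler_pdivrMr // (mulrC (norm2 _)).
exact: le_trans (ler_wpM2l mu0 (dist_argmin_M Sxbar x_rho)).
Qed.

Lemma residual_bound_of_riem_bound eps mu : 0 < mu -> S xbar ->
  riem_bound eps mu -> residual_bound (Num.min eps rho) (t * mu / (t * mu + t * L + 1)).
Proof.
move=> mu0 Sxbar riem_b x; rewrite lt_min => /andP[x_eps near].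
have SM_xbar : (S `&` M) xbar by split; [exact: Sxbar | move=> i].
set y := x - projI x.
have y_near := norm2_subr_projI_le x; rewrite -/y in y_near.
have My : M y := M_subr_projI x.
have [y_eps y_rho] : norm2 (y - xbar) < eps /\ norm2 (y - xbar) < rho by split; lra.
have := riem_b y My y_eps; rewrite riem_grad_near // => y_bound.
have grad_y : norm2 (gradM y) <= norm2 (gradM x) + L * norm2 (projI x).
  have := norm2_triangle (gradM y) (gradM x) 0; rewrite !subr0.
  have := gradM_lipschitz y x; rewrite /y addrAC subrr add0r norm2N; lra.
have dist_x : dist x S <= norm2 (projI x) + dist y (S `&` M).
  apply: le_trans (dist_triangle x y Sxbar) _; rewrite /y opprB addrCA subrr addr0 lerD2l.
  exact: dist_subset SM_xbar (@subIsetl _ _ _).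
rewrite prox_grad_residual //; set r := norm2 (projI x + t *: gradM x).
have a_le := norm2_projI_le x; have b_le := norm2_gradM_le x; rewrite -/r in a_le b_le.
have D0 : 0 < t * mu + t * L + 1 by rewrite !addr_gt0 ?mulr_gt0.
rewrite mulrAC ler_pdivrMr //.
have : mu * dist x S <= mu * (norm2 (projI x) + dist y (S `&` M)) by rewrite ler_pM2l.
have : t * mu * norm2 (projI x) <= t * mu * r by rewrite ler_pM2l ?mulr_gt0.
have : t * L * norm2 (projI x) <= t * L * r by rewrite ler_pM2l ?mulr_gt0.
move=> h1 h2 h3.
have : t * (mu * dist x S) <= t * (mu * norm2 (projI x) + norm2 (gradM x) + L * norm2 (projI x)).
  by rewrite ler_pM2l //; lra.
lra.
Qed.

End NearMinimizer.

Unset Implicit Arguments.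

Theorem theorem5 (R : realType) (n : nat) (g : 'rV[R]_n -> R)
  (dg : 'rV[R]_n -> 'rV[R]_n) (L lam t : R) (xbar : 'rV[R]_n) :
  is_gradient g dg -> 0 < L -> lipschitz_grad dg L -> 0 < lam -> 0 < t ->
  let h := fun x => lam * norm1 x in
  let f := fun x => g x + h x in
  let S := argmin f in
  let M := manifoldM xbar in
  S xbar ->
  ri (subdiff_f dg lam xbar) 0 ->
  ((exists eps mu : R, [/\ 0 < eps, 0 < mu &
      forall x, norm2 (x - xbar) < eps ->
        mu * dist x S <= norm2 (x - prox t h (x - t *: dg x))])
   <->
   (exists eps mu : R, [/\ 0 < eps, 0 < mu &
      forall x, M x -> norm2 (x - xbar) < eps ->
        mu * dist x (S `&` M) <= norm2 (riem_grad M f x)])).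
Proof.
move=> Hg L0 HL l0 t0 h f S M Sxbar xbar_ri.
have [c c0 c_margin] := pos_lower_bound (fun k => margin_gt0 l0 k xbar_ri).
have rho0 := rho_gt0 L0 t0 c0.
split=> -[eps [mu [eps0 mu0 bound]]].
  exists (Num.min eps (rho L t c / 2)), (mu / t); split.
  - by rewrite lt_min eps0 divr_gt0.
  - by rewrite divr_gt0.
  - exact: (riem_bound_of_residual_bound Hg L0 HL l0 t0 xbar_ri.1 c0 c_margin)
      (ltW mu0) Sxbar bound.
exists (Num.min eps (rho L t c)), (t * mu / (t * mu + t * L + 1)); split.
- by rewrite lt_min eps0.
- by rewrite divr_gt0 ?mulr_gt0 ?addr_gt0 ?mulr_gt0.
- exact: (residual_bound_of_riem_bound Hg L0 HL l0 t0 xbar_ri.1 c0 c_margin)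
    mu0 Sxbar bound.
Qed.
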